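(* Let $\mathbf{k}$ be an algebraically closed field of characteristic zero and let $\mathbb{H}_4$ be Sweedler's 4-dimensional Hopf algebra, with basis $\{1,g,\nu,g\nu\}$. Then every relaxed weak post-Hopf algebra structure $\rhd$ on $\mathbb{H}_4$ has one of the following forms (in each case $x\rhd 1=\varepsilon(x)1$, i.e. $1\rhd 1=g\rhd 1=1$ and $\nu\rhd 1=g\nu\rhd 1=0$; the remaining values are listed): (i) for some parameter $a\in\mathbf{k}$: $1\rhd g=g$, $1\rhd\nu=\nu$, $1\rhd g\nu=g\nu$; $g\rhd g=g$, $g\rhd\nu=-\nu$, $g\rhd g\nu=-g\nu$; $\nu\rhd g=0$, $\nu\rhd\nu=a\nu$, $\nu\rhd g\nu=ag\nu$; $g\nu\rhd g=0$, $g\nu\rhd\nu=a\nu$, $g\nu\rhd g\nu=ag\nu$. (ii) for some parameter $a\in\mathbf{k}$: $1\rhd g=g$, $1\rhd\nu=\nu$, $1\rhd g\nu=g\nu$; $g\rhd g=1$, $g\rhd\nu=0$, $g\rhd g\nu=0$; $\nu\rhd g=a1-ag$, $\nu\rhd\nu=-a\nu$, $\nu\rhd g\nu=-ag\nu$; $g\nu\rhd g=a1-ag$, $g\nu\rhd\nu=-a\nu$, $g\nu\rhd g\nu=-ag\nu$. (iii) $1\rhd g=g$, $1\rhd\nu=\nu$, $1\rhd g\nu=g\nu$; $g\rhd g=g$, $g\rhd\nu=\nu$, $g\rhd g\nu=g\nu$; and $\nu\rhd y=g\nu\rhd y=0$ for $y\in\{g,\nu,g\nu\}$. (iv) $1\rhd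 g=g$, $g\rhd g=g$, and $x\rhd y=0$ for all $x\in\{1,g,\nu,g\nu\}$, $y\in\{\nu,g\nu\}$, and $\nu\rhd g=g\nu\rhd g=0$. (v) $1\rhd g=g$, $g\rhd g=1$, and $x\rhd y=0$ for all $x\in\{1,g,\nu,g\nu\}$, $y\in\{\nu,g\nu\}$, and $\nu\rhd g=g\nu\rhd g=0$. (vi) $1\rhd g=1$, $g\rhd g=1$, and $x\rhd y=0$ for all $x\in\{1,g,\nu,g\nu\}$, $y\in\{\nu,g\nu\}$, and $\nu\rhd g=g\nu\rhd g=0$.
   Context: Sweedler's 4-dimensional Hopf algebra $\mathbb{H}_4$ is the algebra generated by $g,\nu$ with relations $g^2=1$, $\nu^2=0$, $g\nu+\nu g=0$, with coproduct $\Delta(g)=g\otimes g$, $\Delta(\nu)=g\otimes\nu+\nu\otimes 1$, counit $\varepsilon(g)=1$, $\varepsilon(\nu)=0$, antipode $S(g)=g$, $S(\nu)=-g\nu$. Sweedler notation $\Delta(x)=x_1\otimes x_2$ is used with summation suppressed. A relaxed weak post-Hopf algebra structure on a Hopf algebra $H$ is a linear map $\rhd:H\otimes H\to H$ which is a coalgebra homomorphism, where $H\otimes H$ carries the tensor product coalgebra structure (i.e. $\Delta(x\rhd y)=(x_1\rhd y_1)\otimes(x_2\rhd y_2)$ and $\varepsilon(x\rhd y)=\varepsilon(x)\varepsilon(y)$), satisfying for all $x,y,z\in H$: (1) $x\rhd(yz)=(x_1\rhd y)(x_2\rhd z)$; (2) $x\rhd(y\rhd z)=\big(x_1(x_2\rhd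 y)\big)\rhd z$. (No condition $1\rhd x=x$ is imposed.) The map $\rhd$ is determined by its values $x\rhd y$ on basis elements $x,y\in\{1,g,\nu,g\nu\}$, extended bilinearly. *)

(* Sweedler's Hopf algebra H4 over a field F, realized as
   row vectors 'rV[F]_4 in the basis e_0 = 1, e_1 = g, e_2 = nu, e_3 = g nu.
   H4 (x) H4 is realized as 4x4 matrices: T a b = coefficient of e_a (x) e_b. *)
From HB Require Import structures.
From mathcomp Require Import all_boot all_order all_algebra.
Set Implicit Arguments. Unset Strict Implicit. Unset Printing Implicit Defensive.
Import Order.TTheory GRing.Theory Num.Theory.
Local Open Scope ring_scope.

Section H4.
Variable F : fieldType.

Definition i1 : 'I_4 := @Ordinal 4 0 isT.
Definition ig : 'I_4 := @Ordinal 4 1 isT.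
Definition inu : 'I_4 := @Ordinal 4 2 isT.
Definition ignu : 'I_4 := @Ordinal 4 3 isT.

Definition e (i : 'I_4) : 'rV[F]_4 := delta_mx 0 i.
Definition one := e i1.
Definition gg := e ig.
Definition nu := e inu.
Definition gnu := e ignu.

(* products of basis elements: g^2 = 1, nu^2 = 0, g nu = - nu g *)
Definition mulb (i j : 'I_4) : 'rV[F]_4 :=
  match nat_of_ord i, nat_of_ord j with
  | 0, _ => e j
  | _, 0 => e i
  | 1, 1 => one
  | 1, 2 => gnu
  | 1, 3 => nu
  | 2, 1 => - gnu
  | 3, 1 => - nu
  | _, _ => 0
  end.

Definition mul (x y : 'rV[F]_4) : 'rV[F]_4 :=
  \sum_i \sum_j (x 0 i * y 0 j) *: mulb i j.

Definition tens (u v : 'rV[F]_4) : 'M[F]_4 := u^T *m v.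

Definition copb (i : 'I_4) : 'M[F]_4 :=
  match nat_of_ord i with
  | 0 => tens one one
  | 1 => tens gg gg
  | 2 => tens gg nu + tens nu one
  | _ => tens one gnu + tens gnu gg
  end.

Definition cop (x : 'rV[F]_4) : 'M[F]_4 := \sum_i x 0 i *: copb i.

Definition eps (x : 'rV[F]_4) : F := x 0 i1 + x 0 ig.

(* Sweedler sum: for T = sum x1 (x) x2, swe T f = sum f x1 x2
   (f is bilinear in the Sweedler components) *)
Definition swe (V : lmodType F) (T : 'M[F]_4) (f : 'rV[F]_4 -> 'rV[F]_4 -> V) : V :=
  \sum_a \sum_b T a b *: f (e a) (e b).

(* A bilinear map H4 (x) H4 -> H4 given by its values R i j = e_i |> e_j *)
Definition rhd (R : 'I_4 -> 'I_4 -> 'rV[F]_4) (x y : 'rV[F]_4) : 'rV[F]_4 :=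
  \sum_i \sum_j (x 0 i * y 0 j) *: R i j.

Definition is_rwpH (R : 'I_4 -> 'I_4 -> 'rV[F]_4) : Prop :=
  (forall x y, cop (rhd R x y) =
     swe (cop x) (fun x1 x2 => swe (cop y) (fun y1 y2 =>
        tens (rhd R x1 y1) (rhd R x2 y2)))) /\
  (forall x y, eps (rhd R x y) = eps x * eps y) /\
  (* (1) *)
  (forall x y z, rhd R x (mul y z) =
     swe (cop x) (fun x1 x2 => mul (rhd R x1 y) (rhd R x2 z))) /\
  (* (2) *)
  (forall x y z, rhd R x (rhd R y z) =
     rhd R (swe (cop x) (fun x1 x2 => mul x1 (rhd R x2 y))) z).

Definition unit_vals R : Prop :=
  R i1 i1 = one /\ R ig i1 = one /\ R inu i1 = 0 /\ R ignu i1 = 0.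

Definition case_i R (a : F) : Prop :=
  unit_vals R /\
  R i1 ig = gg /\ R i1 inu = nu /\ R i1 ignu = gnu /\
  R ig ig = gg /\ R ig inu = - nu /\ R ig ignu = - gnu /\
  R inu ig = 0 /\ R inu inu = a *: nu /\ R inu ignu = a *: gnu /\
  R ignu ig = 0 /\ R ignu inu = a *: nu /\ R ignu ignu = a *: gnu.

Definition case_ii R (a : F) : Prop :=
  unit_vals R /\
  R i1 ig = gg /\ R i1 inu = nu /\ R i1 ignu = gnu /\
  R ig ig = one /\ R ig inu = 0 /\ R ig ignu = 0 /\
  R inu ig = a *: one - a *: gg /\ R inu inu = - (a *: nu) /\
  R inu ignu = - (a *: gnu) /\
  R ignu ig = a *: one - a *: gg /\ R ignu inu = - (a *: nu) /\
  R ignu ignu = - (a *: gnu).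

Definition case_iii R : Prop :=
  unit_vals R /\
  R i1 ig = gg /\ R i1 inu = nu /\ R i1 ignu = gnu /\
  R ig ig = gg /\ R ig inu = nu /\ R ig ignu = gnu /\
  R inu ig = 0 /\ R inu inu = 0 /\ R inu ignu = 0 /\
  R ignu ig = 0 /\ R ignu inu = 0 /\ R ignu ignu = 0.

Definition case_ivvi R (v1g vgg : 'rV[F]_4) : Prop :=
  unit_vals R /\
  R i1 ig = v1g /\ R ig ig = vgg /\
  (forall x, R x inu = 0 /\ R x ignu = 0) /\
  R inu ig = 0 /\ R ignu ig = 0.

Definition case_iv R := case_ivvi R gg gg.
Definition case_v R := case_ivvi R gg one.
Definition case_vi R := case_ivvi R one one.

End H4.

From HB Require Import structures.
From mathcomp Require Import all_boot all_order all_algebra ring.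
From Pilot Require Import Defs.
Set Implicit Arguments. Unset Strict Implicit. Unset Printing Implicit Defensive.
Import GRing.Theory.
Local Open Scope ring_scope.

(* For grouplike x, y in {1, g}, the coalgebra-map condition makes x |> y grouplike,
   hence equal to 1 or g, and (1) forces x |> 1 = eps(x) 1.  Likewise x |> nu, x |> g nu,
   nu |> g and g nu |> g are skew-primitive, and the skew-primitive elements of H4 lie in
   the span of 1 - g and nu or g nu.  What is left, the pair (1 |> g, g |> g) and a few
   scalars, is pinned down by reading (1), (2) and the coalgebra condition off
   coordinatewise: the pair (1, g) is impossible, 1 |> nu is 0 or nu, and when it is 0
   the identity x |> (1 |> y) = x |> y kills every x |> nu and x |> g nu.  Characteristic
   zero enters only through 2 != 0. *)

Lemma big_ord4 (V : nmodType) (f : 'I_4 -> V) :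
  \sum_(l < 4) f l = f i1 + f ig + f inu + f ignu.
Proof.
rewrite !big_ord_recl big_ord0 addr0 !addrA.
by congr (_ + _ + _ + _); congr f; apply: val_inj.
Qed.

Lemma ord4P (i : 'I_4) : [\/ i = i1, i = ig, i = inu | i = ignu].
Proof.
by case: i => [[|[|[|[|//]]]] ?]; [apply: Or41|apply: Or42|apply: Or43|apply: Or44];
  apply: val_inj.
Qed.

Ltac case_ord4 i := case: (ord4P i) => ->.
Ltac basis_simpl := rewrite /copb /mulb /= /Defs.one /gg /nu /gnu.
Ltac simpl01 := rewrite /= ?(mul0r, mulr0, mul1r, mulr1, scale0r, scale1r, add0r, addr0).

Section Basis.
Variable F : fieldType.
Local Notation e := (e F).

Lemma row4_eq (v w : 'rV[F]_4) : v 0 i1 = w 0 i1 -> v 0 ig = w 0 ig ->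
  v 0 inu = w 0 inu -> v 0 ignu = w 0 ignu -> v = w.
Proof. by move=> *; apply/rowP => k; case_ord4 k. Qed.

Lemma tensE (u v : 'rV[F]_4) a b : tens u v a b = u 0 a * v 0 b.
Proof. by rewrite /tens mxE big_ord1 mxE. Qed.

Lemma mul_e i j : mul (e i) (e j) = mulb F i j.
Proof. by rewrite /mul !big_ord4 !mxE; case_ord4 i; case_ord4 j; simpl01. Qed.

Lemma mulx0 (x : 'rV[F]_4) : mul x 0 = 0.
Proof. by rewrite /mul big1 // => i _; rewrite big1 // => j _; rewrite mxE mulr0 scale0r. Qed.

Lemma cop_e i : cop (e i) = copb F i.
Proof. by rewrite /cop !big_ord4 !mxE; case_ord4 i; simpl01. Qed.

Lemma rhd_e R i j : rhd R (e i) (e j) = R i j.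
Proof. by rewrite /rhd !big_ord4 !mxE; case_ord4 i; case_ord4 j; simpl01. Qed.

Lemma rhdN R x y : rhd R x (- y) = - rhd (F:=F) R x y.
Proof.
rewrite /rhd -sumrN; apply: eq_bigr => i _; rewrite -sumrN; apply: eq_bigr => j _.
by rewrite mxE mulrN scaleNr.
Qed.

Lemma rhd0 R x : rhd R x 0 = 0 :> 'rV[F]_4.
Proof. by rewrite /rhd big1 // => i _; rewrite big1 // => j _; rewrite mxE mulr0 scale0r. Qed.

Lemma sweD (V : lmodType F) T1 T2 (f : 'rV[F]_4 -> 'rV[F]_4 -> V) :
  swe (T1 + T2) f = swe T1 f + swe T2 f.
Proof.
rewrite /swe -big_split; apply: eq_bigr => a _; rewrite -big_split.
by apply: eq_bigr => b _; rewrite mxE scalerDl.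
Qed.

Lemma swe_tens (V : lmodType F) a b (f : 'rV[F]_4 -> 'rV[F]_4 -> V) :
  swe (tens (e a) (e b)) f = f (e a) (e b).
Proof. by rewrite /swe !big_ord4 !tensE !mxE; case_ord4 a; case_ord4 b; simpl01. Qed.

Lemma mulE_1 (x y : 'rV[F]_4) : mul x y 0 i1 = x 0 i1 * y 0 i1 + x 0 ig * y 0 ig.
Proof. rewrite /mul !big_ord4; basis_simpl; rewrite !mxE /=; ring. Qed.

Lemma mulE_g (x y : 'rV[F]_4) : mul x y 0 ig = x 0 i1 * y 0 ig + x 0 ig * y 0 i1.
Proof. rewrite /mul !big_ord4; basis_simpl; rewrite !mxE /=; ring. Qed.

Lemma mulE_nu (x y : 'rV[F]_4) : mul x y 0 inu =
  x 0 i1 * y 0 inu + x 0 inu * y 0 i1 + x 0 ig * y 0 ignu - x 0 ignu * y 0 ig.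
Proof. rewrite /mul !big_ord4; basis_simpl; rewrite !mxE /=; ring. Qed.

Lemma mulE_gnu (x y : 'rV[F]_4) : mul x y 0 ignu =
  x 0 i1 * y 0 ignu + x 0 ignu * y 0 i1 + x 0 ig * y 0 inu - x 0 inu * y 0 ig.
Proof. rewrite /mul !big_ord4; basis_simpl; rewrite !mxE /=; ring. Qed.

Lemma copE (v : 'rV[F]_4) a b : cop v a b =
  v 0 i1 * copb F i1 a b + v 0 ig * copb F ig a b + v 0 inu * copb F inu a b
  + v 0 ignu * copb F ignu a b.
Proof. by rewrite /cop summxE big_ord4 !mxE. Qed.

Lemma rhdE R (x y : 'rV[F]_4) c :
  rhd R x y 0 c = \sum_(i < 4) \sum_(j < 4) x 0 i * y 0 j * R i j 0 c.
Proof.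
rewrite /rhd summxE; apply: eq_bigr => i _; rewrite summxE.
by apply: eq_bigr => j _; rewrite mxE.
Qed.

Lemma rhdE_r R (x : 'rV[F]_4) k c : rhd R x (e k) 0 c =
  x 0 i1 * R i1 k 0 c + x 0 ig * R ig k 0 c + x 0 inu * R inu k 0 c
  + x 0 ignu * R ignu k 0 c.
Proof.
by rewrite rhdE big_ord4; congr (_ + _ + _ + _); rewrite big_ord4 !mxE;
  case_ord4 k; simpl01.
Qed.

Lemma rhdE_l R (y : 'rV[F]_4) i c : rhd R (e i) y 0 c =
  y 0 i1 * R i i1 0 c + y 0 ig * R i ig 0 c + y 0 inu * R i inu 0 c
  + y 0 ignu * R i ignu 0 c.
Proof. by rewrite rhdE !big_ord4 !mxE; case_ord4 i; simpl01. Qed.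

End Basis.

Section Scalars.
Variable F : fieldType.

Lemma eq_of_scaled_diff (c X Y P Q : F) : X = Y -> P - Q = c * (X - Y) -> P = Q.
Proof. by move=> -> h; apply/eqP; rewrite -subr_eq0 h subrr mulr0. Qed.

Lemma scaled_diff_neq1 (c X Y : F) : X = Y -> 1 - 0 = c * (X - Y) -> False.
Proof. by move=> h1 /(eq_of_scaled_diff h1)/eqP; rewrite oner_eq0. Qed.

Lemma mulff_eq0 (x : F) : x * x = 0 -> x = 0.
Proof. by rewrite -expr2 => /eqP; rewrite sqrf_eq0 => /eqP. Qed.

Lemma mulff_eq1 (x : F) : x * x = 1 -> x = 1 \/ x = -1.
Proof. by rewrite -expr2 => /eqP; rewrite sqrf_eq1 => /orP[] /eqP; [left|right]. Qed.

Lemma mulff_idem (x : F) : x * x = x -> x = 0 \/ x = 1.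
Proof.
move=> h; have /eqP : x * (x - 1) = 0 by rewrite mulrBr mulr1 h subrr.
by rewrite mulf_eq0 subr_eq0 => /orP[] /eqP; [left|right].
Qed.

End Scalars.

(* Closes [P = Q] from [h : X = Y] when [P - Q] is a small multiple of [X - Y]. *)
Ltac solve_lin h := first
  [ apply: (eq_of_scaled_diff (c:=1) h); ring | apply: (eq_of_scaled_diff (c:=-1) h); ring
  | apply: (eq_of_scaled_diff (c:=2) h); ring | apply: (eq_of_scaled_diff (c:=-2) h); ring ].

Section PrimitiveElements.
Variable F : fieldType.
Implicit Types h v : 'rV[F]_4.

Lemma grouplike_H4 v :
  cop v = tens v v -> eps v = 1 -> v = one F \/ v = gg F.
Proof.
move=> hv h1g; have coord a b : v 0 a * v 0 b = cop v a b by rewrite hv tensE.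
have v_nu : v 0 inu = 0.
  by apply: mulff_eq0; rewrite coord copE; basis_simpl; rewrite !(tensE, mxE) /=; ring.
have v_gnu : v 0 ignu = 0.
  by apply: mulff_eq0; rewrite coord copE; basis_simpl; rewrite !(tensE, mxE) /=; ring.
have v_1 : v 0 i1 * v 0 i1 = v 0 i1.
  by rewrite coord copE; basis_simpl; rewrite !(tensE, mxE) /=; ring.
have v_1g : v 0 i1 * v 0 ig = 0.
  by rewrite coord copE; basis_simpl; rewrite !(tensE, mxE) /=; ring.
have [v1|v1] := mulff_idem v_1.
- right; apply: row4_eq; rewrite /gg !mxE /= ?v1 ?v_nu ?v_gnu //.
  by move: h1g; rewrite /eps v1 add0r.
- left; apply: row4_eq; rewrite /Defs.one !mxE /= ?v1 ?v_nu ?v_gnu //.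
  by move: v_1g; rewrite v1 mul1r.
Qed.

Ltac entry_of hv a b := have := congr1 (fun M : 'M_4 => M a b) hv;
  rewrite copE; basis_simpl; rewrite !(tensE, mxE) /=;
  let h := fresh in move=> h; solve_lin h.

Lemma primitive_H4 h v : h = one F \/ h = gg F ->
  cop v = tens h v + tens v h -> v = 0.
Proof.
case=> -> hv; apply: row4_eq; rewrite !mxE;
  [ entry_of hv i1 i1 | entry_of hv ig ig | entry_of hv ig inu | entry_of hv ignu ig
  | entry_of hv i1 i1 | entry_of hv ig ig | entry_of hv inu i1 | entry_of hv i1 ignu ].
Qed.

Lemma skew_primitive_g1 v : cop v = tens (gg F) v + tens v (one F) ->
  v 0 ig = - v 0 i1 /\ v 0 ignu = 0.
Proof. by move=> hv; split; [entry_of hv ig i1 | entry_of hv i1 ignu]. Qed.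

Lemma skew_primitive_1g v : cop v = tens (one F) v + tens v (gg F) ->
  v 0 ig = - v 0 i1 /\ v 0 inu = 0.
Proof. by move=> hv; split; [entry_of hv i1 ig | entry_of hv inu i1]. Qed.

End PrimitiveElements.

Section Classification.
Variable F : fieldType.
Hypothesis two_neq0 : (2 : F) != 0.
Variable R : 'I_4 -> 'I_4 -> 'rV[F]_4.
Hypothesis hR : is_rwpH R.
Local Notation e := (e F).
Local Notation one := (one F).
Local Notation gg := (gg F).
Local Notation nu := (nu F).
Local Notation gnu := (gnu F).

Lemma cop_R i j : cop (R i j) = swe (copb F i) (fun x1 x2 => swe (copb F j)
  (fun y1 y2 => tens (rhd R x1 y1) (rhd R x2 y2))).
Proof. by case: hR => hC _; rewrite -(rhd_e R i j) hC !cop_e. Qed.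

Lemma eps_R i j : eps (R i j) = eps (e i) * eps (e j).
Proof. by case: hR => _ [hE _]; rewrite -(rhd_e R i j) hE. Qed.

Lemma rhd_mulb i j k : rhd R (e i) (mulb F j k) =
  swe (copb F i) (fun x1 x2 => mul (rhd R x1 (e j)) (rhd R x2 (e k))).
Proof. by case: hR => _ [_ [hM _]]; rewrite -mul_e hM cop_e. Qed.

Lemma rhd_R i j k : rhd R (e i) (R j k) =
  rhd R (swe (copb F i) (fun x1 x2 => mul x1 (rhd R x2 (e j)))) (e k).
Proof. by case: hR => _ [_ [_ hA]]; rewrite -(rhd_e R j k) hA cop_e. Qed.

Ltac expand := basis_simpl; rewrite ?sweD ?swe_tens /= ?sweD ?swe_tens /= ?rhd_e ?rhdN ?rhd0;
  rewrite ?copE ?rhdE_r ?rhdE_l; basis_simpl;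
  rewrite ?(tensE, mulE_1, mulE_g, mulE_nu, mulE_gnu, mxE) /=.
Ltac expand_swe := basis_simpl; rewrite ?sweD ?swe_tens /= ?sweD ?swe_tens /= !rhd_e.
(* Rewrites with every known entry or row of [R]; no such fact may mention its own
   left-hand side on the right, or this loops. *)
Ltac rewrite_known := repeat match goal with
  | H : R _ _ = _ |- _ => progress rewrite H
  | H : @fun_of_matrix _ _ _ (R _ _) _ _ = _ |- _ => progress rewrite H end.
Ltac known := rewrite_known; rewrite /Defs.one /Defs.gg /Defs.nu /Defs.gnu
  ?(tensE, mulE_1, mulE_g, mulE_nu, mulE_gnu, mxE) /=; rewrite_known.
Ltac conclude := known; let h := fresh in move=> h; solve_lin h.
Ltac refute := known; let h := fresh in move=> h; exfalso; first
  [ apply: (scaled_diff_neq1 (c:=1) h); ring | apply: (scaled_diff_neq1 (c:=-1) h); ring ].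
Ltac mul_at i j k c := have := congr1 (fun v : 'rV_4 => v 0 c) (rhd_mulb i j k); expand.
Ltac assoc_at i j k c := have := congr1 (fun v : 'rV_4 => v 0 c) (rhd_R i j k); expand.
Ltac coalg_at i j a b := have := congr1 (fun M : 'M_4 => M a b) (cop_R i j); expand.
Ltac row_by_mul i j k := apply: row4_eq;
  [ mul_at i j k i1; conclude | mul_at i j k ig; conclude
  | mul_at i j k inu; conclude | mul_at i j k ignu; conclude ].
Ltac row_by_assoc i j k := apply: row4_eq;
  [ assoc_at i j k i1; conclude | assoc_at i j k ig; conclude
  | assoc_at i j k inu; conclude | assoc_at i j k ignu; conclude ].

Lemma double_eq0 (x : F) : 2 * x = 0 -> x = 0.
Proof. by move/eqP; rewrite mulf_eq0 (negbTE two_neq0) => /eqP. Qed.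

Lemma R_grouplike i j : i \in [:: i1; ig] -> j \in [:: i1; ig] -> R i j = one \/ R i j = gg.
Proof.
move=> hi hj; apply: grouplike_H4.
- by move: hi hj; rewrite !inE => /orP[]/eqP-> /orP[]/eqP->;
    rewrite cop_R; expand_swe.
- by move: hi hj; rewrite eps_R !inE => /orP[]/eqP-> /orP[]/eqP->;
    rewrite /eps !mxE /= ?(mulr1, addr0, add0r).
Qed.

Lemma cop_R_nu i : i \in [:: i1; ig] ->
  cop (R i inu) = tens (R i ig) (R i inu) + tens (R i inu) (R i i1).
Proof.
by rewrite !inE => /orP[]/eqP->; rewrite cop_R; expand_swe.
Qed.

Lemma cop_R_gnu i : i \in [:: i1; ig] ->
  cop (R i ignu) = tens (R i i1) (R i ignu) + tens (R i ignu) (R i ig).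
Proof.
by rewrite !inE => /orP[]/eqP->; rewrite cop_R; expand_swe.
Qed.

Lemma cop_nu_R j : j \in [:: i1; ig] ->
  cop (R inu j) = tens (R ig j) (R inu j) + tens (R inu j) (R i1 j).
Proof.
by rewrite !inE => /orP[]/eqP->; rewrite cop_R; expand_swe.
Qed.

Lemma cop_gnu_R j : j \in [:: i1; ig] ->
  cop (R ignu j) = tens (R i1 j) (R ignu j) + tens (R ignu j) (R ig j).
Proof.
by rewrite !inE => /orP[]/eqP->; rewrite cop_R; expand_swe.
Qed.

Lemma R_mul_grouplike i j k : i \in [:: i1; ig] ->
  rhd R (e i) (mulb F j k) = mul (R i j) (R i k).
Proof. by rewrite rhd_mulb !inE => /orP[]/eqP->; expand_swe. Qed.

Lemma R_unit : unit_vals R.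
Proof.
have r11 : R i1 i1 = one.
  by case: (R_grouplike (i := i1) (j := i1) isT isT) => // h; mul_at i1 i1 i1 ig; refute.
have rg1 : R ig i1 = one.
  by case: (R_grouplike (i := ig) (j := i1) isT isT) => // h; mul_at ig i1 i1 ig; refute.
do 3!split=> //; apply: (primitive_H4 (h := one)); try by left.
- by rewrite cop_nu_R // r11 rg1.
- by rewrite cop_gnu_R // r11 rg1.
Qed.

(* x |> (1 |> y) = (x_1 (x_2 |> 1)) |> y = (x_1 eps(x_2)) |> y = x |> y. *)
Lemma rhd_R_one i j : rhd R (e i) (R i1 j) = R i j.
Proof.
have [r11 [rg1 [rnu1 rgnu1]]] := R_unit.
rewrite rhd_R -[R i j](rhd_e R i j); congr (rhd R _ _).
by case_ord4 i; basis_simpl; rewrite ?sweD !swe_tens /= !rhd_e ?r11 ?rg1 ?rnu1 ?rgnu1 ?mulx0;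
  basis_simpl; rewrite !mul_e; basis_simpl; rewrite ?addr0 ?add0r.
Qed.

Lemma R_nu_eq0_of_one : R i1 inu = 0 -> R i1 ignu = 0 ->
  forall x, R x inu = 0 /\ R x ignu = 0.
Proof. by move=> h1nu h1gnu x; rewrite -!(rhd_R_one x) h1nu h1gnu rhd0. Qed.

Lemma R_nu_eq0 i : i \in [:: i1; ig] -> R i ig = one -> R i inu = 0 /\ R i ignu = 0.
Proof.
move=> hi hA; have [r11 [rg1 _]] := R_unit.
have ri1 : R i i1 = one by move: hi; rewrite !inE => /orP[]/eqP->.
split; apply: (primitive_H4 (h := one)); try by left.
- by rewrite cop_R_nu // hA ri1.
- by rewrite cop_R_gnu // hA ri1.
Qed.

(* x |> nu is (x |> g, 1)-skew-primitive, and its square is x |> nu^2 = 0. *)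
Lemma R_nu_scalar i : i \in [:: i1; ig] -> R i ig = gg ->
  exists d, R i inu = d *: nu /\ R i ignu = d *: gnu.
Proof.
move=> hi hA; have [r11 [rg1 _]] := R_unit.
have ri1 : R i i1 = one by move: hi; rewrite !inE => /orP[]/eqP->.
have [nu_g nu_gnu] : R i inu 0 ig = - R i inu 0 i1 /\ R i inu 0 ignu = 0.
  by apply: skew_primitive_g1; rewrite cop_R_nu // hA ri1.
have nu_1 : R i inu 0 i1 = 0.
  apply/mulff_eq0/double_eq0.
  have := congr1 (fun v : 'rV_4 => v 0 i1) (R_mul_grouplike inu inu hi).
  by basis_simpl; rewrite rhd0 mulE_1 nu_g mxE => h; solve_lin h.
exists (R i inu 0 inu); split.
- by apply: row4_eq; known; ring.
- have := R_mul_grouplike ig inu hi; basis_simpl; rewrite rhd_e hA => ->.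
  by apply: row4_eq; rewrite ?mulE_1 ?mulE_g ?mulE_nu ?mulE_gnu; known; ring.
Qed.

Lemma case_ivvi_of : R i1 inu = 0 -> R i1 ignu = 0 -> R inu ig = 0 -> R ignu ig = 0 ->
  case_ivvi R (R i1 ig) (R ig ig).
Proof.
move=> h1nu h1gnu hnug hgnug; split; first exact: R_unit.
by do 3!split=> //; exact: R_nu_eq0_of_one.
Qed.

Lemma classify_11 : R i1 ig = one -> R ig ig = one -> case_vi R.
Proof.
move=> hA hB.
suff: case_ivvi R (R i1 ig) (R ig ig) by rewrite hA hB.
have [h1nu h1gnu] := R_nu_eq0 (i := i1) isT hA.
apply: case_ivvi_of => //; apply: (primitive_H4 (h := one)); try by left.
- by rewrite cop_nu_R // hA hB.
- by rewrite cop_gnu_R // hA hB.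
Qed.

Lemma classify_1g : R i1 ig = one -> R ig ig = gg -> False.
Proof. by move=> hA hB; assoc_at ig ig ig ig; refute. Qed.

Lemma R_nu_g_of_g1 : R i1 ig = gg -> R ig ig = one ->
  exists a, R inu ig = a *: one - a *: gg /\ R ignu ig = a *: one - a *: gg.
Proof.
move=> hA hB; have [r11 [rg1 [rnu1 rgnu1]]] := R_unit.
have [nug_g nug_nu] : R inu ig 0 ig = - R inu ig 0 i1 /\ R inu ig 0 inu = 0.
  by apply: skew_primitive_1g; rewrite cop_nu_R // hA hB.
have nug_gnu : R inu ig 0 ignu = 0 by mul_at inu ig ig ignu; conclude.
have [gnug_g gnug_gnu] : R ignu ig 0 ig = - R ignu ig 0 i1 /\ R ignu ig 0 ignu = 0.
  by apply: skew_primitive_g1; rewrite cop_gnu_R // hA hB.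
have gnug_nu : R ignu ig 0 inu = 0 by mul_at ignu ig ig inu; conclude.
have gnug_1 : R ignu ig 0 i1 = R inu ig 0 i1 by assoc_at inu ig ig i1; conclude.
by exists (R inu ig 0 i1); split; apply: row4_eq; known; ring.
Qed.

Lemma case_ii_of a : R i1 ig = gg -> R ig ig = one -> R i1 inu = nu -> R i1 ignu = gnu ->
  R inu ig = a *: one - a *: gg -> R ignu ig = a *: one - a *: gg -> case_ii R a.
Proof.
move=> hA hB h1nu h1gnu hnug hgnug; have [r11 [rg1 [rnu1 rgnu1]]] := R_unit.
have [hgnu hggnu] := R_nu_eq0 (i := ig) isT hB.
have hnunu : R inu inu = - (a *: nu).
  by apply: row4_eq; [coalg_at inu inu i1 i1 | coalg_at inu inu ig ig
    | coalg_at inu inu ig inu | coalg_at inu inu ignu ig]; conclude.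
have hnugnu : R inu ignu = - (a *: gnu) by row_by_mul inu ig inu.
have hgnunu : R ignu inu = - (a *: nu) by row_by_assoc inu ig inu.
have hgnugnu : R ignu ignu = - (a *: gnu) by row_by_mul ignu ig inu.
by do !split.
Qed.

Lemma classify_g1 : R i1 ig = gg -> R ig ig = one -> (exists a, case_ii R a) \/ case_v R.
Proof.
move=> hA hB; have [r11 [rg1 [rnu1 rgnu1]]] := R_unit.
have [s [h1nu h1gnu]] := R_nu_scalar (i := i1) isT hA.
have [hgnu hggnu] := R_nu_eq0 (i := ig) isT hB.
have [a [hnug hgnug]] := R_nu_g_of_g1 hA hB.
have s_idem : s * s = s by assoc_at i1 i1 inu inu; conclude.
have [s0|s1] := mulff_idem s_idem; rewrite ?s0 ?s1 ?scale0r ?scale1r in h1nu h1gnu.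
- have a0 : a = 0 by assoc_at i1 inu ig i1; conclude.
  right; suff: case_ivvi R (R i1 ig) (R ig ig) by rewrite hA hB.
  by apply: case_ivvi_of; rewrite // ?hnug ?hgnug a0 !scale0r subr0.
- by left; exists a; apply: case_ii_of.
Qed.

Section OneFixesNu.
Hypotheses (hA : R i1 ig = gg) (hB : R ig ig = gg).
Hypotheses (h1nu : R i1 inu = nu) (h1gnu : R i1 ignu = gnu).
Hypotheses (hnug : R inu ig = 0) (hgnug : R ignu ig = 0).

Lemma case_iii_of : R ig inu = nu -> R ig ignu = gnu -> case_iii R.
Proof.
move=> hgnu hggnu; have [r11 [rg1 [rnu1 rgnu1]]] := R_unit.
have nunu_g : R inu inu 0 ig = - R inu inu 0 i1 by coalg_at inu inu ig i1; conclude.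
have nunu_gnu : R inu inu 0 ignu = 0 by coalg_at inu inu i1 ignu; conclude.
have gnunu_g : R ignu inu 0 ig = - R ignu inu 0 i1 by coalg_at ignu inu ig i1; conclude.
have gnunu_gnu : R ignu inu 0 ignu = 0 by coalg_at ignu inu i1 ignu; conclude.
have gnunu_nu : R ignu inu 0 inu = R inu inu 0 inu by assoc_at ig inu inu inu; conclude.
have nunu_1 : R inu inu 0 i1 = 0 by apply: double_eq0; mul_at inu inu inu inu; conclude.
have gnunu_1 : R ignu inu 0 i1 = 0 by apply: double_eq0; mul_at ignu inu inu inu; conclude.
have nunu_nu : R inu inu 0 inu = 0 by apply: double_eq0; assoc_at inu ig inu inu; conclude.
have hnunu : R inu inu = 0 by apply: row4_eq; known; ring.
have hgnunu : R ignu inu = 0 by apply: row4_eq; known; ring.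
have hnugnu : R inu ignu = 0 by row_by_mul inu ig inu.
have hgnugnu : R ignu ignu = 0 by row_by_mul ignu ig inu.
by do !split.
Qed.

Lemma case_i_of : R ig inu = - nu -> R ig ignu = - gnu -> exists a, case_i R a.
Proof.
move=> hgnu hggnu; have [r11 [rg1 [rnu1 rgnu1]]] := R_unit.
have nunu_g : R inu inu 0 ig = - R inu inu 0 i1 by coalg_at inu inu ig i1; conclude.
have nunu_gnu : R inu inu 0 ignu = 0 by coalg_at inu inu i1 ignu; conclude.
have gnunu_g : R ignu inu 0 ig = - R ignu inu 0 i1 by coalg_at ignu inu ig i1; conclude.
have gnunu_gnu : R ignu inu 0 ignu = 0 by coalg_at ignu inu i1 ignu; conclude.
have gnunu_nu : R ignu inu 0 inu = R inu inu 0 inu by assoc_at ig inu inu inu; conclude.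
have nunu_1 : R inu inu 0 i1 = 0 by apply: double_eq0; mul_at inu inu inu ignu; conclude.
have gnunu_1 : R ignu inu 0 i1 = 0 by apply: double_eq0; mul_at ignu inu inu ignu; conclude.
have hnugnu : R inu ignu = R inu inu 0 inu *: gnu by row_by_mul inu ig inu.
have hgnugnu : R ignu ignu = R inu inu 0 inu *: gnu by row_by_mul ignu ig inu.
have hgnunu : R ignu inu = R inu inu 0 inu *: nu by apply: row4_eq; known; ring.
exists (R inu inu 0 inu); do !split => //.
by apply: row4_eq; known; ring.
Qed.

End OneFixesNu.

Lemma classify_gg : R i1 ig = gg -> R ig ig = gg ->
  (exists a, case_i R a) \/ case_iii R \/ case_iv R.
Proof.
move=> hA hB; have [r11 [rg1 [rnu1 rgnu1]]] := R_unit.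
have [s [h1nu h1gnu]] := R_nu_scalar (i := i1) isT hA.
have [d [hgnu hggnu]] := R_nu_scalar (i := ig) isT hB.
have s_idem : s * s = s by assoc_at i1 i1 inu inu; conclude.
have d_sq : d * d = s by assoc_at ig ig inu inu; conclude.
have hnug : R inu ig = 0.
  by apply: (primitive_H4 (h := gg)); [right | rewrite cop_nu_R // hA hB].
have hgnug : R ignu ig = 0.
  by apply: (primitive_H4 (h := gg)); [right | rewrite cop_gnu_R // hA hB].
have [s0|s1] := mulff_idem s_idem; rewrite ?s0 ?s1 ?scale0r ?scale1r in h1nu h1gnu d_sq.
- right; right; suff: case_ivvi R (R i1 ig) (R ig ig) by rewrite hA hB.
  exact: case_ivvi_of.
- have [d1|d1] := mulff_eq1 d_sq; rewrite d1 ?scale1r ?scaleN1r in hgnu hggnu.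
  + by right; left; apply: case_iii_of.
  + by left; apply: case_i_of.
Qed.

End Classification.

Theorem theorem1 (F : closedFieldType) (hF : [pchar F] =i pred0)
    (R : 'I_4 -> 'I_4 -> 'rV[F]_4) :
  is_rwpH R ->
  (exists a : F, case_i R a) \/ (exists a : F, case_ii R a) \/
  case_iii R \/ case_iv R \/ case_v R \/ case_vi R.
Proof.
move=> hR; have two_neq0 : (2 : F) != 0 by move: (hF 2); rewrite !inE => /negbT.
have [A|A] := R_grouplike hR (i := i1) (j := ig) isT isT;
  have [B|B] := R_grouplike hR (i := ig) (j := ig) isT isT.
- by do 5!right; exact: classify_11.
- by case: (classify_1g hR A B).
- by have [[a ?]|?] := classify_g1 two_neq0 hR A B; [right; left; exists a | do 4!right; left].
- by have [?|[?|?]] := classify_gg two_neq0 hR A B; [left | do 2!right; left | do 3!right; left].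
Qed.
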